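(* Let $(X,d)$ be a compact metric space. If $X$ admits a conical bicombing, then $X$ admits an $\mathrm{Iso}(X)$-equivariant reversible conical bicombing.
   Context: A bicombing on $(X,d)$ is a map $\sigma\colon X\times X\times[0,1]\to X$ such that each $\sigma_{xy}:=\sigma(x,y,\cdot)$ is a geodesic from $x$ to $y$ ($\sigma_{xy}(0)=x$, $\sigma_{xy}(1)=y$, $d(\sigma_{xy}(s),\sigma_{xy}(t))=|s-t|d(x,y)$); it is conical if $d(\sigma_{xy}(t),\sigma_{x'y'}(t))\le(1-t)d(x,x')+t\,d(y,y')$ for all $x,y,x',y'$, $t\in[0,1]$, and reversible if $\sigma_{xy}(t)=\sigma_{yx}(1-t)$. It is $\mathrm{Iso}(X)$-equivariant if $f(\sigma(x,y,t))=\sigma(f(x),f(y),t)$ for all $(x,y,t)\in X\times X\times[0,1]$ and every isometry $f\colon X\to X$. *)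

From Stdlib Require Import Reals List.
Open Scope R_scope.

Definition is_metric {X : Type} (d : X -> X -> R) : Prop :=
  (forall x y, 0 <= d x y) /\
  (forall x y, d x y = 0 <-> x = y) /\
  (forall x y, d x y = d y x) /\
  (forall x y z, d x z <= d x y + d y z).

Definition open_set {X : Type} (d : X -> X -> R) (U : X -> Prop) : Prop :=
  forall x, U x -> exists e, 0 < e /\ forall y, d x y < e -> U y.

Definition compact_metric {X : Type} (d : X -> X -> R) : Prop :=
  forall (I : Type) (U : I -> X -> Prop),
    (forall i, open_set d (U i)) ->
    (forall x, exists i, U i x) ->
    exists l : list I, forall x, exists i, In i l /\ U i x.

Definition isometry {X : Type} (d : X -> X -> R) (f : X -> X) : Prop :=
  (forall x y, d (f x) (f y) = d x y) /\ (forall y, exists x, f x = y).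

Definition bicombing {X : Type} (d : X -> X -> R) (sigma : X -> X -> R -> X) : Prop :=
  forall x y,
    sigma x y 0 = x /\ sigma x y 1 = y /\
    (forall s t, 0 <= s <= 1 -> 0 <= t <= 1 ->
       d (sigma x y s) (sigma x y t) = Rabs (s - t) * d x y).

Definition conical {X : Type} (d : X -> X -> R) (sigma : X -> X -> R -> X) : Prop :=
  forall x y x' y' t, 0 <= t <= 1 ->
    d (sigma x y t) (sigma x' y' t) <= (1 - t) * d x x' + t * d y y'.

Definition reversible {X : Type} (sigma : X -> X -> R -> X) : Prop :=
  forall x y t, 0 <= t <= 1 -> sigma x y t = sigma y x (1 - t).

Definition iso_equivariant {X : Type} (d : X -> X -> R) (sigma : X -> X -> R -> X) : Prop :=
  forall f, isometry d f ->
    forall x y t, 0 <= t <= 1 -> f (sigma x y t) = sigma (f x) (f y) t.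

From Stdlib Require Import Reals Lra Lia List ClassicalEpsilon Classical.
Open Scope R_scope.

(* For the uniform distance, the conical bicombings of X form a totally bounded set on
   which Iso(X) (by conjugation) and reversal act isometrically, and which is convex: a
   conical bicombing can combine two others pointwise. Starting from all conical
   bicombings, pass repeatedly to the Chebyshev centers of nearly optimal radius. This keeps
   the set nonempty, convex and invariant under both actions, and by total boundedness the
   barycenter of one representative per small cell is a center whose radius is a fixed
   fraction below the diameter, so the diameters tend to 0. Points chosen in the successive
   sets converge uniformly, and the limit is a conical bicombing fixed by both actions. *)

Lemma list_bounded {A : Type} (f : A -> R) (l : list A) :
  exists B, forall x, In x l -> f x <= B.
Proof.
  induction l as [|a l [B HB]].
  - exists 0. intros _ [].
  - exists (Rmax (f a) B). intros x [<-|Hx].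
    + apply Rmax_l.
    + eapply Rle_trans; [apply HB; exact Hx|apply Rmax_r].
Qed.

Lemma nat_floor_le (M : nat) (u : R) :
  0 <= u <= INR M -> exists k, (k <= M)%nat /\ INR k <= u <= INR k + 1.
Proof.
  induction M as [|M IH]; intros Hu.
  - exists 0%nat. simpl in *. split; [lia|lra].
  - rewrite S_INR in Hu. destruct (Rle_dec u (INR M)) as [HuM|HuM].
    + destruct (IH ltac:(lra)) as (k & Hk & Hku). exists k. split; [lia|exact Hku].
    + exists M. split; [lia|lra].
Qed.

Lemma list_power_choice {A B : Type} (P : A -> B -> Prop) (l : list A) (l' : list B) :
  (forall x, In x l -> exists y, In y l' /\ P x y) ->
  exists c, In c (list_power l l') /\ Forall (fun p => P (fst p) (snd p)) c.
Proof.
  induction l as [|x l IH]; intros HP.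
  - exists nil. split; [left; reflexivity|constructor].
  - destruct IH as (c & Hc & HPc); [intros; apply HP; right; assumption|].
    destruct (HP x (or_introl eq_refl)) as (y & Hy & Pxy).
    exists ((x, y) :: c). split.
    + apply in_flat_map. exists c. split; [exact Hc|].
      apply in_map_iff. exists y. split; [reflexivity|exact Hy].
    + constructor; assumption.
Qed.

Lemma list_power_total {A B : Type} (l : list A) (l' : list B) c x :
  In c (list_power l l') -> In x l -> exists y, In (x, y) c.
Proof.
  revert c. induction l as [|x' l IH]; intros c Hc Hx; [destruct Hx|].
  apply in_flat_map in Hc as (c' & Hc' & Hc). apply in_map_iff in Hc as (y & <- & _).
  destruct Hx as [<-|Hx].
  - exists y. left. reflexivity.
  - destruct (IH c' Hc' Hx) as (y' & Hy'). exists y'. right. exact Hy'.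
Qed.

Definition sumR (l : list R) : R := fold_right Rplus 0 l.

Lemma sumR_le_length {A : Type} (f : A -> R) (L : list A) r :
  (forall y, In y L -> f y <= r) -> sumR (map f L) <= INR (length L) * r.
Proof.
  induction L as [|y L IH]; intros HL; [simpl; lra|].
  change (f y + sumR (map f L) <= INR (S (length L)) * r). rewrite S_INR.
  pose proof (HL y (or_introl eq_refl)).
  assert (sumR (map f L) <= INR (length L) * r) by (apply IH; intros; apply HL; right; auto).
  lra.
Qed.

Lemma sumR_le_length_one {A : Type} (f : A -> R) (L : list A) r y0 :
  (forall y, In y L -> f y <= r) -> In y0 L ->
  sumR (map f L) <= INR (length L) * r - (r - f y0).
Proof.
  induction L as [|y L IH]; intros HL Hy0; [destruct Hy0|].
  change (f y + sumR (map f L) <= INR (S (length L)) * r - (r - f y0)). rewrite S_INR.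
  assert (HL' : forall y', In y' L -> f y' <= r) by (intros; apply HL; right; auto).
  destruct Hy0 as [<-|Hy0].
  - pose proof (sumR_le_length f L r HL'). lra.
  - pose proof (HL y (or_introl eq_refl)). pose proof (IH HL' Hy0). lra.
Qed.

Definition combing (X : Type) : Type := X -> X -> R -> X.

Section ConicalBicombings.

Context {X : Type} (d : X -> X -> R) (Hm : is_metric d).

Lemma dist_nonneg x y : 0 <= d x y.
Proof. exact (proj1 Hm x y). Qed.

Lemma dist_refl x : d x x = 0.
Proof. apply (proj1 (proj2 Hm)). reflexivity. Qed.

Lemma dist_eq0 x y : d x y = 0 -> x = y.
Proof. apply (proj1 (proj2 Hm)). Qed.

Lemma dist_sym x y : d x y = d y x.
Proof. exact (proj1 (proj2 (proj2 Hm)) x y). Qed.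

Lemma dist_triangle x y z : d x z <= d x y + d y z.
Proof. exact (proj2 (proj2 (proj2 Hm)) x y z). Qed.

Lemma dist_triangle3 w x y z : d w z <= d w x + d x y + d y z.
Proof. pose proof (dist_triangle w x z). pose proof (dist_triangle x y z). lra. Qed.

Lemma eq_of_dist_small x y : (forall e, 0 < e -> d x y <= e) -> x = y.
Proof.
  intros Hxy. apply dist_eq0, Rle_antisym; [|apply dist_nonneg].
  apply Rle_plus_epsilon. intros e He. rewrite Rplus_0_l. exact (Hxy e He).
Qed.

Lemma geodesic_of_lipschitz (g : R -> X) x y : g 0 = x -> g 1 = y ->
  (forall s t, 0 <= s <= 1 -> 0 <= t <= 1 -> d (g s) (g t) <= Rabs (s - t) * d x y) ->
  forall s t, 0 <= s <= 1 -> 0 <= t <= 1 -> d (g s) (g t) = Rabs (s - t) * d x y.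
Proof.
  intros <- <- Hlip.
  assert (Hlow : forall s t, 0 <= s <= t -> t <= 1 -> (t - s) * d (g 0) (g 1) <= d (g s) (g t)).
  { intros s t Hst Ht1.
    pose proof (Hlip 0 s ltac:(lra) ltac:(lra)). pose proof (Hlip t 1 ltac:(lra) ltac:(lra)).
    rewrite Rabs_minus_sym, Rabs_pos_eq in * by lra.
    pose proof (dist_triangle3 (g 0) (g s) (g t) (g 1)). lra. }
  intros s t Hs Ht. apply Rle_antisym; [apply Hlip; assumption|].
  destruct (Rle_dec s t).
  - rewrite Rabs_minus_sym, Rabs_pos_eq by lra. apply Hlow; lra.
  - rewrite Rabs_pos_eq, (dist_sym (g s)) by lra. apply Hlow; lra.
Qed.

Lemma bicombing_diag s : bicombing d s -> forall x t, 0 <= t <= 1 -> s x x t = x.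
Proof.
  intros Hs x t Ht. destruct (Hs x x) as (H0 & _ & Hgeo).
  assert (Hd : d (s x x 0) (s x x t) = 0) by (rewrite Hgeo, dist_refl by lra; ring).
  rewrite H0 in Hd. symmetry. apply dist_eq0, Hd.
Qed.

Definition conical_bicombing (s : combing X) : Prop := bicombing d s /\ conical d s.

Definition sup_close (r : R) (s s' : combing X) : Prop :=
  forall x y t, 0 <= t <= 1 -> d (s x y t) (s' x y t) <= r.

Definition combine (s : combing X) (l : R) (s1 s2 : combing X) : combing X :=
  fun x y t => s (s1 x y t) (s2 x y t) l.

Definition reverse (s : combing X) : combing X := fun x y t => s y x (1 - t).

Definition iso_inv (f : X -> X) : X -> X := fun y => epsilon (inhabits y) (fun x => f x = y).

Definition transport (f : X -> X) (s : combing X) : combing X :=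
  fun x y t => f (s (iso_inv f x) (iso_inv f y) t).

Lemma sup_close_mono r r' s s' : sup_close r s s' -> r <= r' -> sup_close r' s s'.
Proof. intros H Hr x y t Ht. pose proof (H x y t Ht). lra. Qed.

Lemma conical_dist_point s u v c l : conical_bicombing s -> 0 <= l <= 1 ->
  d (s u v l) c <= (1 - l) * d u c + l * d v c.
Proof.
  intros [Hb Hc] Hl. rewrite <- (bicombing_diag s Hb c l Hl) at 1. apply Hc, Hl.
Qed.

Lemma conical_bicombing_combine s s1 s2 l : 0 <= l <= 1 ->
  conical_bicombing s -> conical_bicombing s1 -> conical_bicombing s2 ->
  conical_bicombing (combine s l s1 s2).
Proof.
  intros Hl Hs [Hb1 Hc1] [Hb2 Hc2]. pose proof Hs as [Hb Hc]. unfold combine. split.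
  - intros x y. destruct (Hb1 x y) as (A0 & A1 & Ag). destruct (Hb2 x y) as (B0 & B1 & Bg).
    assert (E0 : s (s1 x y 0) (s2 x y 0) l = x) by (rewrite A0, B0; apply bicombing_diag; auto).
    assert (E1 : s (s1 x y 1) (s2 x y 1) l = y) by (rewrite A1, B1; apply bicombing_diag; auto).
    split; [exact E0|split; [exact E1|]].
    apply (geodesic_of_lipschitz (fun t => s (s1 x y t) (s2 x y t) l)); [exact E0|exact E1|].
    intros u v Hu Hv. eapply Rle_trans; [apply Hc, Hl|].
    rewrite Ag, Bg by assumption. lra.
  - intros x y x' y' t Ht. eapply Rle_trans; [apply Hc, Hl|].
    pose proof (Hc1 x y x' y' t Ht). pose proof (Hc2 x y x' y' t Ht). nra.
Qed.

Lemma conical_bicombing_reverse s : conical_bicombing s -> conical_bicombing (reverse s).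
Proof.
  intros [Hb Hc]. unfold reverse. split.
  - intros x y. destruct (Hb y x) as (A0 & A1 & Ag).
    rewrite Rminus_0_r, Rminus_diag. split; [exact A1|split; [exact A0|]].
    intros u v Hu Hv. rewrite Ag, (dist_sym y x) by lra.
    rewrite Rabs_minus_sym. f_equal. f_equal. ring.
  - intros x y x' y' t Ht. eapply Rle_trans; [apply Hc; lra|lra].
Qed.

Section Isometries.

Variable f : X -> X.
Hypothesis Hf : isometry d f.

Lemma iso_inv_r y : f (iso_inv f y) = y.
Proof. apply (epsilon_spec (inhabits y) (fun x => f x = y)), (proj2 Hf). Qed.

Lemma iso_inv_l x : iso_inv f (f x) = x.
Proof. apply dist_eq0. rewrite <- (proj1 Hf), iso_inv_r. apply dist_refl. Qed.

Lemma isometry_iso_inv : isometry d (iso_inv f).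
Proof.
  split.
  - intros x y. rewrite <- (proj1 Hf), !iso_inv_r. reflexivity.
  - intros x. exists (f x). apply iso_inv_l.
Qed.

Lemma conical_bicombing_transport s : conical_bicombing s -> conical_bicombing (transport f s).
Proof.
  intros [Hb Hc]. pose proof (proj1 isometry_iso_inv) as Hg. unfold transport. split.
  - intros x y. destruct (Hb (iso_inv f x) (iso_inv f y)) as (A0 & A1 & Ag).
    rewrite A0, A1, !iso_inv_r. split; [reflexivity|split; [reflexivity|]].
    intros u v Hu Hv. rewrite (proj1 Hf), Ag, Hg by assumption. reflexivity.
  - intros x y x' y' t Ht. rewrite (proj1 Hf), <- (Hg x x'), <- (Hg y y'). apply Hc, Ht.
Qed.

End Isometries.

Lemma conical_bicombing_of_approx tau :
  (forall e, 0 < e -> exists s, conical_bicombing s /\ sup_close e s tau) ->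
  conical_bicombing tau.
Proof.
  intros Happ.
  assert (Hends : forall x y, tau x y 0 = x /\ tau x y 1 = y).
  { intros x y. split; apply eq_of_dist_small; intros e He;
      destruct (Happ e He) as (s & [Hb _] & Hst); destruct (Hb x y) as (A0 & A1 & _).
    - rewrite <- A0 at 2. rewrite dist_sym. apply Hst. lra.
    - rewrite <- A1 at 2. rewrite dist_sym. apply Hst. lra. }
  split.
  - intros x y. destruct (Hends x y) as [E0 E1]. split; [exact E0|split; [exact E1|]].
    apply (geodesic_of_lipschitz (tau x y)); [exact E0|exact E1|].
    intros u v Hu Hv. apply Rle_plus_epsilon. intros e He.
    destruct (Happ (e / 2) ltac:(lra)) as (s & [Hb _] & Hst). destruct (Hb x y) as (_ & _ & Ag).
    pose proof (Hst x y u Hu) as Hu'. pose proof (Hst x y v Hv). rewrite dist_sym in Hu'.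
    pose proof (dist_triangle3 (tau x y u) (s x y u) (s x y v) (tau x y v)).
    rewrite Ag in * by assumption. lra.
  - intros x y x' y' t Ht. apply Rle_plus_epsilon. intros e He.
    destruct (Happ (e / 2) ltac:(lra)) as (s & [_ Hc] & Hst). pose proof (Hc x y x' y' t Ht).
    pose proof (Hst x y t Ht) as Hxy. pose proof (Hst x' y' t Ht). rewrite dist_sym in Hxy.
    pose proof (dist_triangle3 (tau x y t) (s x y t) (s x' y' t) (tau x' y' t)). lra.
Qed.

Lemma reversible_of_approx tau :
  (forall e, 0 < e -> exists s, sup_close e s tau /\ sup_close e s (reverse s)) ->
  reversible tau.
Proof.
  intros Happ x y t Ht. apply eq_of_dist_small. intros e He.
  destruct (Happ (e / 3) ltac:(lra)) as (s & Hst & Hrev).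
  pose proof (Hst x y t Ht) as Hxy. pose proof (Hst y x (1 - t) ltac:(lra)).
  pose proof (Hrev x y t Ht). unfold reverse in *. rewrite dist_sym in Hxy.
  pose proof (dist_triangle3 (tau x y t) (s x y t) (s y x (1 - t)) (tau y x (1 - t))). lra.
Qed.

Lemma equivariant_of_approx tau :
  (forall f, isometry d f -> forall e, 0 < e ->
     exists s, sup_close e s tau /\ sup_close e s (transport f s)) ->
  iso_equivariant d tau.
Proof.
  intros Happ f Hf x y t Ht. apply eq_of_dist_small. intros e He.
  destruct (Happ f Hf (e / 3) ltac:(lra)) as (s & Hst & Htr).
  pose proof (Hst x y t Ht) as Hxy. pose proof (Hst (f x) (f y) t Ht).
  pose proof (Htr (f x) (f y) t Ht) as Hf'. unfold transport in Hf'.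
  rewrite !iso_inv_l, dist_sym in Hf' by exact Hf. rewrite dist_sym, <- (proj1 Hf) in Hxy.
  pose proof (dist_triangle3 (f (tau x y t)) (f (s x y t)) (s (f x) (f y) t) (tau (f x) (f y) t)).
  lra.
Qed.

Definition combine_closed (K : combing X -> Prop) : Prop :=
  forall s s1 s2 l, 0 <= l <= 1 -> K s -> K s1 -> K s2 -> K (combine s l s1 s2).

(* The weights make [barycenter s0 L] the equally weighted mean of the members of [L];
   [s0] only serves as the bicombing along which they are combined. *)
Fixpoint barycenter (s0 : combing X) (L : list (combing X)) : combing X :=
  match L with
  | nil => s0
  | y :: ys => combine s0 (INR (length ys) / INR (S (length ys))) y (barycenter s0 ys)
  end.

Lemma barycenter_weight_range m : 0 <= INR m / INR (S m) <= 1.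
Proof.
  rewrite S_INR. pose proof (pos_INR m). split.
  - apply Rmult_le_pos; [lra|]. left. apply Rinv_0_lt_compat. lra.
  - apply Rmult_le_reg_r with (INR m + 1); [lra|]. field_simplify; lra.
Qed.

Lemma barycenter_closed K s0 L : combine_closed K -> K s0 -> (forall y, In y L -> K y) ->
  K (barycenter s0 L).
Proof.
  intros HK Hs0. induction L as [|y ys IH]; intros HL; [exact Hs0|].
  apply HK; [apply barycenter_weight_range|exact Hs0|apply HL; left; reflexivity|].
  apply IH. intros; apply HL; right; assumption.
Qed.

Lemma barycenter_dist s0 L x y t c : conical_bicombing s0 ->
  INR (length L) * d (barycenter s0 L x y t) c <= sumR (map (fun s => d (s x y t) c) L).
Proof.
  intros Hs0. induction L as [|z zs IH]; [simpl; lra|].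
  change (INR (S (length zs)) *
            d (combine s0 (INR (length zs) / INR (S (length zs))) z (barycenter s0 zs) x y t) c
          <= d (z x y t) c + sumR (map (fun s => d (s x y t) c) zs)).
  unfold combine. set (m := length zs) in *.
  pose proof (conical_dist_point s0 (z x y t) (barycenter s0 zs x y t) c _ Hs0
                (barycenter_weight_range m)) as Hcomb.
  rewrite S_INR in *. pose proof (pos_INR m).
  apply Rle_trans with (d (z x y t) c + INR m * d (barycenter s0 zs x y t) c); [|lra].
  eapply Rle_trans; [apply Rmult_le_compat_l; [lra|exact Hcomb]|].
  right. field. lra.
Qed.

Definition cell_cover (eta : R) (C : list (combing X -> Prop)) : Prop :=
  (forall s, conical_bicombing s -> exists c, In c C /\ c s) /\
  (forall c, In c C -> forall s s', conical_bicombing s -> conical_bicombing s' ->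
     c s -> c s' -> sup_close eta s s').

Lemma cell_representatives K eta (C : list (combing X -> Prop)) :
  (forall s, K s -> conical_bicombing s) ->
  (forall c, In c C -> forall s s', conical_bicombing s -> conical_bicombing s' ->
     c s -> c s' -> sup_close eta s s') ->
  exists L, (forall y, In y L -> K y) /\ (length L <= length C)%nat /\
    forall x, K x -> forall c, In c C -> c x -> exists y, In y L /\ sup_close eta y x.
Proof.
  intros HK. induction C as [|c C IH]; intros Hdiam.
  - exists nil. split; [|split]; [intros _ []|simpl; lia|intros _ _ _ []].
  - destruct IH as (L & HL & Hlen & Hrep); [intros c' Hc'; apply Hdiam; right; exact Hc'|].
    destruct (classic (exists y, K y /\ c y)) as [(y & Hy & Hcy)|Hnone].
    + exists (y :: L). split; [|split].
      * intros z [<-|Hz]; auto.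
      * simpl. lia.
      * intros x Hx c' [<-|Hc'] Hcx.
        -- exists y. split; [left; reflexivity|]. apply (Hdiam c); auto. left; reflexivity.
        -- destruct (Hrep x Hx c' Hc' Hcx) as (y' & ? & ?). exists y'. split; [right|]; auto.
    + exists L. split; [exact HL|split; [simpl; lia|]].
      intros x Hx c' [<-|Hc'] Hcx; [exfalso; apply Hnone; exists x; auto|].
      exact (Hrep x Hx c' Hc' Hcx).
Qed.

Definition centers (K : combing X -> Prop) (r : R) (z : combing X) : Prop :=
  K z /\ forall x, K x -> sup_close r z x.

(* [0 <= r] keeps the admissible radii bounded below even when [X] is empty. *)
Definition has_center (K : combing X -> Prop) (r : R) : Prop :=
  0 <= r /\ exists z, centers K r z.

Lemma has_center_mono K r r' : has_center K r -> r <= r' -> has_center K r'.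
Proof.
  intros (Hr & z & Hz & Hzx) Hrr'. split; [lra|]. exists z. split; [exact Hz|].
  intros x Hx. exact (sup_close_mono _ _ _ _ (Hzx x Hx) Hrr').
Qed.

(* Normal structure: averaging one representative per cell gives a center whose radius
   beats the diameter [r] by a fixed fraction of [r - eta]. *)
Lemma combine_closed_small_center K r eta C :
  (forall s, K s -> conical_bicombing s) -> combine_closed K -> (exists s, K s) ->
  (forall s s', K s -> K s' -> sup_close r s s') -> 0 <= eta <= r -> cell_cover eta C ->
  has_center K (r - (r - eta) / INR (length C)).
Proof.
  intros HK Hcomb (s0 & Hs0) Hdiam Heta [Hcov Hcell].
  destruct (cell_representatives K eta C HK Hcell) as (L & HL & Hlen & Hrep).
  destruct (Hcov s0 (HK s0 Hs0)) as (c0 & Hc0 & Hcs0).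
  destruct (Hrep s0 Hs0 c0 Hc0 Hcs0) as (y0 & Hy0 & _).
  assert (HL0 : 1 <= INR (length L)).
  { destruct L as [|z L]; [destruct Hy0|]. simpl length. rewrite S_INR.
    pose proof (pos_INR (length L)). lra. }
  assert (HLC : INR (length L) <= INR (length C)) by (apply le_INR; exact Hlen).
  set (q := (r - eta) / INR (length C)).
  assert (Hq : q * INR (length C) = r - eta) by (unfold q; field; lra).
  assert (Hq0 : 0 <= q) by (unfold q; apply Rmult_le_pos; [lra|left; apply Rinv_0_lt_compat; lra]).
  clearbody q.
  split; [nra|]. exists (barycenter s0 L). split; [apply barycenter_closed; auto|].
  intros x Hx a b t Ht.
  destruct (Hcov x (HK x Hx)) as (c & Hc & Hcx).
  destruct (Hrep x Hx c Hc Hcx) as (y & Hy & Hyx).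
  pose proof (barycenter_dist s0 L a b t (x a b t) (HK s0 Hs0)) as Hbar.
  pose proof (sumR_le_length_one (fun s : combing X => d (s a b t) (x a b t)) L r y
                (fun z Hz => Hdiam z x (HL z Hz) Hx a b t Ht) Hy) as Hsum.
  pose proof (Rle_trans _ _ _ Hbar Hsum). pose proof (Hyx a b t Ht).
  assert (q * INR (length L) <= q * INR (length C)) by (apply Rmult_le_compat_l; lra).
  apply Rmult_le_reg_l with (INR (length L)); lra.
Qed.

Record stable (K : combing X -> Prop) (r : R) : Prop := {
  stable_sub : forall s, K s -> conical_bicombing s;
  stable_combine : combine_closed K;
  stable_transport : forall f, isometry d f -> forall s, K s -> K (transport f s);
  stable_reverse : forall s, K s -> K (reverse s);
  stable_inhabited : exists s, K s;
  stable_diam : forall s s', K s -> K s' -> sup_close r s s';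
  stable_diam_nonneg : 0 <= r }.

Lemma stable_conical_bicombings B : (exists s, conical_bicombing s) -> 0 <= B ->
  (forall x y, d x y <= B) -> stable conical_bicombing B.
Proof.
  intros Hne HB0 HB. split; auto.
  - intros s s1 s2 l Hl Hs Hs1 Hs2. apply conical_bicombing_combine; auto.
  - intros f Hf s Hs. apply conical_bicombing_transport; auto.
  - apply conical_bicombing_reverse.
  - intros s s' _ _ x y t _. apply HB.
Qed.

Lemma stable_has_center K r : stable K r -> has_center K r.
Proof.
  intros HK. split; [apply HK|]. destruct (stable_inhabited _ _ HK) as [z Hz].
  exists z. split; [exact Hz|]. intros x Hx. apply (stable_diam _ _ HK); assumption.
Qed.

Lemma stable_centers K r r' : stable K r -> has_center K r' -> stable (centers K r') r'.
Proof.
  intros HK (Hr' & Hne). split.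
  - intros s [Hs _]. apply (stable_sub _ _ HK), Hs.
  - intros s s1 s2 l Hl [Hs _] [Hs1 Hc1] [Hs2 Hc2]. split; [apply (stable_combine _ _ HK); auto|].
    intros x Hx a b t Ht. unfold combine.
    eapply Rle_trans; [apply conical_dist_point; [apply (stable_sub _ _ HK), Hs|exact Hl]|].
    pose proof (Hc1 x Hx a b t Ht). pose proof (Hc2 x Hx a b t Ht). nra.
  - intros f Hf s [Hs Hc]. split; [apply (stable_transport _ _ HK); auto|].
    intros x Hx a b t Ht. unfold transport.
    pose proof (isometry_iso_inv f Hf) as Hg.
    pose proof (Hc _ (stable_transport _ _ HK _ Hg x Hx) (iso_inv f a) (iso_inv f b) t Ht) as Hd.
    unfold transport in Hd. rewrite !iso_inv_l in Hd by exact Hg.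
    rewrite <- (proj1 Hf), iso_inv_r in Hd by exact Hf. exact Hd.
  - intros s [Hs Hc]. split; [apply (stable_reverse _ _ HK), Hs|].
    intros x Hx a b t Ht. unfold reverse.
    pose proof (Hc _ (stable_reverse _ _ HK x Hx) b a (1 - t) ltac:(lra)) as Hd.
    unfold reverse in Hd. replace (1 - (1 - t)) with t in Hd by ring. exact Hd.
  - exact Hne.
  - intros s s' [Hs Hc] [Hs' _]. apply Hc, Hs'.
  - exact Hr'.
Qed.

(* Halfway between the infimal admissible radius and [r], which is admissible even when
   the infimum is not attained. *)
Definition center_radius (K : combing X -> Prop) (r : R) : R :=
  epsilon (inhabits 0) (fun r' => has_center K r' /\ r' <= r /\
    forall r'', has_center K r'' -> r' <= (r'' + r) / 2).

Lemma center_radius_spec K r : has_center K r ->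
  has_center K (center_radius K r) /\ center_radius K r <= r /\
  forall r', has_center K r' -> center_radius K r <= (r' + r) / 2.
Proof.
  intros Hr. unfold center_radius. apply epsilon_spec.
  set (E := fun v => exists r', has_center K r' /\ v = - r').
  destruct (completeness E) as (m & Hub & Hlub).
  - exists 0. intros v (r' & [Hr' _] & ->). lra.
  - exists (- r), r. split; [exact Hr|reflexivity].
  - assert (Hinf : forall r', has_center K r' -> - m <= r').
    { intros r' Hr'. assert (- r' <= m) by (apply Hub; exists r'; auto). lra. }
    pose proof (Hinf r Hr).
    assert (Hbelow : exists r', has_center K r' /\ r' <= (- m + r) / 2).
    { apply NNPP. intros Hno.
      assert (m <= - ((- m + r) / 2)).
      { apply Hlub. intros v (r' & Hr' & ->). apply Ropp_le_contravar.
        apply Rnot_lt_le. intros Hlt. apply Hno. exists r'. split; [exact Hr'|lra]. }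
      apply Hno. exists r. split; [exact Hr|lra]. }
    destruct Hbelow as (r1 & Hr1 & Hr1le).
    exists ((- m + r) / 2). split; [|split].
    + exact (has_center_mono K r1 _ Hr1 Hr1le).
    + lra.
    + intros r'' Hr''. pose proof (Hinf r'' Hr''). lra.
Qed.

Definition shrink (p : (combing X -> Prop) * R) : (combing X -> Prop) * R :=
  let r := center_radius (fst p) (snd p) in (centers (fst p) r, r).

Lemma stable_shrink p : stable (fst p) (snd p) -> stable (fst (shrink p)) (snd (shrink p)).
Proof.
  intros Hp. destruct (center_radius_spec _ _ (stable_has_center _ _ Hp)) as (Hc & _).
  exact (stable_centers _ _ _ Hp Hc).
Qed.

Lemma stable_iter_shrink n p : stable (fst p) (snd p) ->
  stable (fst (Nat.iter n shrink p)) (snd (Nat.iter n shrink p)).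
Proof.
  intros Hp. induction n as [|n IH]; [exact Hp|]. apply stable_shrink, IH.
Qed.

Lemma shrink_radius p r' : stable (fst p) (snd p) -> has_center (fst p) r' ->
  snd (shrink p) <= (r' + snd p) / 2.
Proof.
  intros Hp Hr'. apply (center_radius_spec _ _ (stable_has_center _ _ Hp)), Hr'.
Qed.

Lemma conical_bicombing_lipschitz s a b a' b' t t' : conical_bicombing s ->
  0 <= t <= 1 -> 0 <= t' <= 1 ->
  d (s a b t) (s a' b' t') <= Rmax (d a a') (d b b') + Rabs (t - t') * d a' b'.
Proof.
  intros [Hb Hc] Ht Ht'. destruct (Hb a' b') as (_ & _ & Hg).
  pose proof (Hc a b a' b' t Ht). pose proof (Rmax_l (d a a') (d b b')).
  pose proof (Rmax_r (d a a') (d b b')).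
  pose proof (dist_triangle (s a b t) (s a' b' t) (s a' b' t')).
  rewrite Hg in * by assumption. nra.
Qed.

Definition grid (A : list X) (M : nat) : list (X * X * R) :=
  list_prod (list_prod A A) (map (fun k => INR k / INR M) (seq 0 (S M))).

Definition eval_at (s : combing X) (q : X * X * R) : X := s (fst (fst q)) (snd (fst q)) (snd q).

Lemma grid_approx A M e B : (forall x, exists a, In a A /\ d x a < e) ->
  (forall x y, d x y <= B) -> B < INR M * e ->
  forall a b t, 0 <= t <= 1 ->
  exists q, In q (grid A M) /\ forall s, conical_bicombing s -> d (s a b t) (eval_at s q) <= 2 * e.
Proof.
  intros HA HB HM a b t Ht.
  destruct (HA a) as (a' & Ha' & Haa'). destruct (HA b) as (b' & Hb' & Hbb').
  assert (HM0 : 0 < INR M) by (pose proof (dist_nonneg a a'); pose proof (HB a a'); nra).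
  destruct (nat_floor_le M (t * INR M)) as (k & Hk & Hkt); [nra|].
  exists (a', b', INR k / INR M). split.
  - apply in_prod; [apply in_prod; assumption|]. apply in_map_iff. exists k.
    split; [reflexivity|]. apply in_seq. lia.
  - intros s Hs. unfold eval_at; simpl. set (tk := INR k / INR M).
    assert (Htk : tk * INR M = INR k) by (unfold tk; field; lra).
    pose proof (pos_INR k). pose proof (le_INR k M Hk). clearbody tk.
    assert (Htk01 : 0 <= tk <= 1) by nra.
    eapply Rle_trans; [apply conical_bicombing_lipschitz; assumption|].
    assert (Rmax (d a a') (d b b') <= e) by (apply Rmax_lub; lra).
    assert (Hdt : (t - tk) * INR M <= 1) by lra.
    assert (Rabs (t - tk) * d a' b' <= e).
    { rewrite Rabs_pos_eq by nra. pose proof (HB a' b'). pose proof (dist_nonneg a' b'). nra. }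
    lra.
Qed.

Section Compactness.

Hypothesis Hk : compact_metric d.

Lemma compact_net e : 0 < e -> exists A : list X, forall x, exists a, In a A /\ d x a < e.
Proof.
  intros He. destruct (Hk X (fun a x => d a x < e)) as (A & HA).
  - intros a x Hx. exists (e - d a x). split; [lra|]. intros y Hy.
    pose proof (dist_triangle a x y). lra.
  - intros x. exists x. rewrite dist_refl. exact He.
  - exists A. intros x. destruct (HA x) as (a & Ha & Hax).
    exists a. rewrite dist_sym. split; assumption.
Qed.

Lemma compact_bounded : exists B, 0 < B /\ forall x y, d x y <= B.
Proof.
  destruct (compact_net 1 ltac:(lra)) as [A HA].
  destruct (list_bounded (fun p => d (fst p) (snd p)) (list_prod A A)) as [B HB].
  exists (Rabs B + 2). split; [pose proof (Rabs_pos B); lra|].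
  intros x y. destruct (HA x) as (a & Ha & Hxa). destruct (HA y) as (b & Hb & Hyb).
  pose proof (HB (a, b) (in_prod A A a b Ha Hb)). pose proof (Rle_abs B).
  pose proof (dist_triangle3 x a b y). rewrite (dist_sym b y) in *. simpl in *. lra.
Qed.

Definition cauchy (u : nat -> X) : Prop :=
  forall e, 0 < e -> exists N, forall m n, (N <= m)%nat -> (N <= n)%nat -> d (u m) (u n) < e.

Definition converges_to (u : nat -> X) (v : X) : Prop :=
  forall e, 0 < e -> exists N, forall n, (N <= n)%nat -> d (u n) v < e.

Lemma compact_complete u : cauchy u -> exists v, converges_to u v.
Proof.
  intros Hu. apply NNPP. intros Hno.
  set (stays_away := fun (N : nat) y =>
         exists e, 0 < e /\ forall n, (N <= n)%nat -> e <= d (u n) y).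
  destruct (Hk nat stays_away) as (l & Hl).
  - intros N y (e & He & Hy). exists (e / 2). split; [lra|]. intros y' Hy'.
    exists (e / 2). split; [lra|]. intros n Hn.
    pose proof (Hy n Hn). pose proof (dist_triangle (u n) y' y). rewrite (dist_sym y' y) in *. lra.
  - intros y.
    assert (Hfreq : exists e, 0 < e /\ forall N, exists n, (N <= n)%nat /\ e <= d (u n) y).
    { apply NNPP. intros Hnf. apply Hno. exists y. intros e He. apply NNPP. intros HN.
      apply Hnf. exists e. split; [exact He|]. intros N. apply NNPP. intros Hnn.
      apply HN. exists N. intros n Hn. apply Rnot_le_lt. intros Hle. apply Hnn. exists n. auto. }
    destruct Hfreq as (e & He & Hfreq). destruct (Hu (e / 2) ltac:(lra)) as [N HN].
    exists N, (e / 2). split; [lra|]. intros n Hn.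
    destruct (Hfreq n) as (m & Hm' & Hme). pose proof (HN m n ltac:(lia) Hn).
    pose proof (dist_triangle (u m) (u n) y). lra.
  - destruct (Hl (u (list_max l))) as (i & Hi & e & He & Hfar).
    assert (Hil : (i <= list_max l)%nat).
    { pose proof (proj1 (list_max_le l (list_max l)) (le_n _)) as Hall.
      rewrite Forall_forall in Hall. exact (Hall i Hi). }
    pose proof (Hfar _ Hil). rewrite dist_refl in *. lra.
Qed.

Lemma conical_bicombings_totally_bounded eta : 0 < eta -> exists C, cell_cover eta C.
Proof.
  intros Heta. set (e := eta / 6).
  destruct (compact_net e) as [A HA]; [unfold e; lra|].
  destruct compact_bounded as (B & HB0 & HB).
  destruct (INR_archimed e B) as [M HM]; [unfold e; lra|].
  (* A cell prescribes, at each grid point, a net point within [e] of the value. *)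
  set (cell := fun (c : list ((X * X * R) * X)) (s : combing X) =>
                 Forall (fun qa => d (eval_at s (fst qa)) (snd qa) < e) c).
  exists (map cell (list_power (grid A M) A)). split.
  - intros s Hs.
    destruct (list_power_choice (fun q a => d (eval_at s q) a < e) (grid A M) A)
      as (c & Hc & Hcs); [intros q _; apply HA|].
    exists (cell c). split; [apply in_map; exact Hc|exact Hcs].
  - intros cl Hcl s s' Hs Hs' Hcs Hcs' a b t Ht.
    apply in_map_iff in Hcl as (c & <- & Hc).
    destruct (grid_approx A M e B HA HB ltac:(lra) a b t Ht) as (q & Hq & Happ).
    destruct (list_power_total _ _ c q Hc Hq) as (a0 & Ha0).
    unfold cell in Hcs, Hcs'. rewrite Forall_forall in Hcs, Hcs'.
    pose proof (Hcs _ Ha0) as H1. pose proof (Hcs' _ Ha0) as H2. simpl in H1, H2.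
    pose proof (Happ s Hs). pose proof (Happ s' Hs').
    pose proof (dist_triangle3 (s a b t) (eval_at s q) (eval_at s' q) (s' a b t)).
    pose proof (dist_triangle (eval_at s q) a0 (eval_at s' q)).
    rewrite (dist_sym (eval_at s' q) (s' a b t)), (dist_sym a0 (eval_at s' q)) in *.
    unfold e in *. lra.
Qed.

Lemma uniform_limit (z : nat -> combing X) (r : nat -> R) :
  (forall n m, (n <= m)%nat -> sup_close (r n) (z n) (z m)) ->
  (forall e, 0 < e -> exists n, r n < e) ->
  exists tau, forall n, sup_close (r n) (z n) tau.
Proof.
  intros Hz Hr.
  assert (Hlim : forall x y t, 0 <= t <= 1 -> exists v, converges_to (fun n => z n x y t) v).
  { intros x y t Ht. apply compact_complete. intros e He.
    destruct (Hr (e / 2) ltac:(lra)) as [N HN]. exists N. intros m k Hm' Hk'. cbv beta.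
    pose proof (Hz N m Hm' x y t Ht). pose proof (Hz N k Hk' x y t Ht).
    pose proof (dist_triangle (z m x y t) (z N x y t) (z k x y t)).
    rewrite (dist_sym (z m x y t) (z N x y t)) in *. lra. }
  exists (fun x y t => epsilon (inhabits x) (converges_to (fun n => z n x y t))).
  intros n x y t Ht. cbv beta.
  set (v := epsilon (inhabits x) (converges_to (fun n => z n x y t))).
  assert (Hv : converges_to (fun n => z n x y t) v) by (apply epsilon_spec, Hlim, Ht).
  apply Rle_plus_epsilon. intros e He. destruct (Hv e He) as [N HN].
  pose proof (HN (Nat.max N n) (Nat.le_max_l N n)).
  pose proof (Hz n (Nat.max N n) (Nat.le_max_r N n) x y t Ht).
  pose proof (dist_triangle (z n x y t) (z (Nat.max N n) x y t) v). lra.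
Qed.

Lemma iter_shrink_radius_vanishes p : stable (fst p) (snd p) ->
  forall e, 0 < e -> exists n, snd (Nat.iter n shrink p) < e.
Proof.
  intros Hp e He. set (eta := e / 2).
  destruct (conical_bicombings_totally_bounded eta) as [C HC]; [unfold eta; lra|].
  set (N := INR (length C)).
  assert (HN : 1 <= N).
  { destruct (stable_inhabited _ _ Hp) as [s Hs].
    destruct (proj1 HC s (stable_sub _ _ Hp s Hs)) as (c & Hc & _).
    destruct C as [|c' C]; [destruct Hc|]. unfold N. simpl length. rewrite S_INR.
    pose proof (pos_INR (length C)). lra. }
  apply NNPP. intros Hno.
  assert (Hge : forall n, e <= snd (Nat.iter n shrink p)).
  { intros n. apply Rnot_lt_le. intros Hlt. apply Hno. exists n. exact Hlt. }
  assert (Hstep : forall n,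
            snd (shrink (Nat.iter n shrink p)) <= snd (Nat.iter n shrink p) - eta / (2 * N)).
  { intros n. pose proof (stable_iter_shrink n p Hp) as Hn. pose proof (Hge n).
    set (r := snd (Nat.iter n shrink p)) in *. set (K := fst (Nat.iter n shrink p)) in *.
    assert (Hsmall : has_center K (r - (r - eta) / N)).
    { apply (combine_closed_small_center K r eta C); try apply Hn; [unfold eta; lra|exact HC]. }
    pose proof (shrink_radius _ _ Hn Hsmall) as Hshrink. fold r in Hshrink.
    assert (eta / N <= (r - eta) / N).
    { apply Rmult_le_compat_r; [left; apply Rinv_0_lt_compat; lra|unfold eta; lra]. }
    replace (eta / (2 * N)) with (eta / N / 2) by (field; lra). lra. }
  assert (Hlin : forall n, snd (Nat.iter n shrink p) <= snd p - INR n * (eta / (2 * N))).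
  { induction n as [|n IH]; [simpl; lra|].
    rewrite S_INR. pose proof (Hstep n). simpl Nat.iter. lra. }
  destruct (INR_archimed (eta / (2 * N)) (snd p)) as [n Hn].
  { apply Rlt_gt, Rdiv_lt_0_compat; unfold eta; lra. }
  pose proof (Hlin n). pose proof (Hge n). lra.
Qed.

Lemma stable_limit (K : nat -> combing X -> Prop) (r : nat -> R) :
  (forall n, stable (K n) (r n)) -> (forall n s, K (S n) s -> K n s) ->
  (forall e, 0 < e -> exists n, r n < e) ->
  exists tau, conical_bicombing tau /\ reversible tau /\ iso_equivariant d tau.
Proof.
  intros Hst Hsub Hvan.
  assert (Hnest : forall n m, (n <= m)%nat -> forall s, K m s -> K n s).
  { intros n m Hnm. induction Hnm as [|m Hnm IH]; auto. }
  set (z := fun n => epsilon (inhabits ((fun x _ _ => x) : combing X)) (K n)).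
  assert (Hz : forall n, K n (z n))
    by (intros n; apply epsilon_spec, (stable_inhabited _ _ (Hst n))).
  destruct (uniform_limit z r) as [tau Htau]; [|exact Hvan|].
  { intros n m Hnm. apply (stable_diam _ _ (Hst n)); [apply Hz|apply (Hnest n m Hnm), Hz]. }
  assert (Happrox : forall e, 0 < e ->
            exists n, sup_close e (z n) tau /\ forall s, K n s -> sup_close e (z n) s).
  { intros e He. destruct (Hvan e He) as [n Hn]. exists n. split.
    - apply (sup_close_mono _ _ _ _ (Htau n)). lra.
    - intros s Hs. apply (sup_close_mono (r n)); [apply (stable_diam _ _ (Hst n)); auto|lra]. }
  exists tau. split; [|split].
  - apply conical_bicombing_of_approx. intros e He. destruct (Happrox e He) as (n & Hn & _).
    exists (z n). split; [apply (stable_sub _ _ (Hst n)), Hz|exact Hn].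
  - apply reversible_of_approx. intros e He. destruct (Happrox e He) as (n & Hn & HK).
    exists (z n). split; [exact Hn|]. apply HK, (stable_reverse _ _ (Hst n)), Hz.
  - apply equivariant_of_approx. intros f Hf e He. destruct (Happrox e He) as (n & Hn & HK).
    exists (z n). split; [exact Hn|]. apply HK, (stable_transport _ _ (Hst n)); [exact Hf|apply Hz].
Qed.

End Compactness.
End ConicalBicombings.

Theorem lemma4p5 (X : Type) (d : X -> X -> R) :
  is_metric d -> compact_metric d ->
  (exists sigma : X -> X -> R -> X, bicombing d sigma /\ conical d sigma) ->
  exists tau : X -> X -> R -> X,
    bicombing d tau /\ conical d tau /\ reversible tau /\ iso_equivariant d tau.
Proof.
  intros Hm Hk Hne.
  destruct (compact_bounded d Hm Hk) as (B & HB0 & HB).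
  assert (Hp : stable d (conical_bicombing d) B)
    by (apply (stable_conical_bicombings d Hm); [exact Hne|lra|exact HB]).
  set (p := (conical_bicombing d, B)).
  destruct (stable_limit d Hm Hk (fun n => fst (Nat.iter n (shrink d) p))
              (fun n => snd (Nat.iter n (shrink d) p))) as (tau & [Hb Hc] & Hrev & Heq).
  - intros n. apply (stable_iter_shrink d Hm), Hp.
  - intros n s [Hs _]. exact Hs.
  - apply (iter_shrink_radius_vanishes d Hm Hk), Hp.
  - exists tau. auto.
Qed.
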